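(* For every integer $n\ge2$ and every integer $k\ge0$, \[ d_{n,k}=\sum_{j=0}^{k}\binom{j+1}{n-k-j}\left(\binom{n-2j-1}{k-j}+\binom{n-2j-3}{k-j-2}\right). \]
   Context: For $n\ge1$ let $\Xi_n$ be the poset on $\{x_1,\dots,x_n\}$ whose cover relations are exactly: $x_2\prec x_1$, $x_3\prec x_2$, and for $3\le i\le n-1$, $x_i\prec x_{i+1}$ if $i$ is odd and $x_{i+1}\prec x_i$ if $i$ is even (so $x_1>x_2>x_3<x_4>x_5<\cdots$). A filter of a poset is an up-closed subset. The matchable Lucas cube $\Omega_n$ is the graph whose vertices are the filters of $\Xi_n$, two filters adjacent iff one is obtained from the other by deleting a single element. $d_{n,k}$ is the number of vertices of degree $k$ in $\Omega_n$. Binomial coefficients: for an integer $a$ and integer $b\ge0$, $\binom ab=a(a-1)\cdots(a-b+1)/b!$ (so $\binom a0=1$ for all integers $a$, and $\binom ab=0$ if $0\le a<b$); $\binom ab=0$ if $b<0$. *)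

From mathcomp Require Import all_boot all_order all_algebra.
Set Implicit Arguments. Unset Strict Implicit. Unset Printing Implicit Defensive.
Import GRing.Theory Num.Theory.

(* Elements x_1,...,x_n of Xi_n are represented by i : 'I_n, with i <-> x_(i+1). *)

(* xi_cover n a b : the cover relation  x_(a+1) < x_(b+1)  (a is covered by b). *)
Definition xi_cover (n : nat) : rel 'I_n := fun a b =>
  let p := (a : nat).+1 in let q := (b : nat).+1 in
  [|| (p == 2) && (q == 1),
      (p == 3) && (q == 2),
      [&& 3 <= p, odd p & q == p.+1]
    | [&& 3 <= q, ~~ odd q & p == q.+1] ].

Definition xi_le (n : nat) : rel 'I_n := connect (@xi_cover n).

Definition is_filter (n : nat) (F : {set 'I_n}) : bool :=
  [forall a, forall b, (a \in F) && xi_le a b ==> (b \in F)].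

Definition omega_adj (n : nat) (F G : {set 'I_n}) : bool :=
  [exists x, ((x \in F) && (G == F :\ x)) || ((x \in G) && (F == G :\ x))].

Definition omega_deg (n : nat) (F : {set 'I_n}) : nat :=
  #|[set G : {set 'I_n} | is_filter G && omega_adj F G]|.

Definition d (n k : nat) : nat :=
  #|[set F : {set 'I_n} | is_filter F && (omega_deg F == k)]|.

Definition binz (a b : int) : int :=
  match b with
  | Posz m => ((\prod_(i < m) (a - (i : nat)%:Z)) %/ (m`!)%:Z)%Z
  | Negz _ => 0
  end.

(* Write a filter of Xi_n as the word of membership bits of x_1, ..., x_n.  Since Xi_n is
   a fence, being a filter is a condition on adjacent letters, and the degree of a filter in
   Omega_n is the number of letters whose flip still gives a filter, again a local condition.
   Reading words from left to right with the state (last letter, whether the last letter may be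
   flipped as far as its left neighbour is concerned) gives a four-state transfer matrix for
   D_n(x) = sum_k d_{n,k} x^k.  As Xi_n alternates from x_2 on, three transfer steps yield
   D_n = x (D_{n-1} + D_{n-2} + D_{n-3}) - x^2 D_{n-3} for n >= 5.  The right-hand side obeys the
   same recurrence coefficientwise, by Pascal's rule (which also holds for the generalised
   binomials at negative arguments) applied to its summands, and both sides agree for
   n = 2, 3, 4. *)

From mathcomp Require Import all_boot all_order all_algebra.
From mathcomp Require Import ring zify.
Import GRing.Theory Num.Theory.
Local Open Scope ring_scope.

Lemma binzE (a b : int) : binz a b =
  match b, a with
  | Negz _, _ => 0
  | Posz m, Posz p => ('C(p, m))%:Z
  | Posz m, Negz c => (-1) ^+ m * ('C(c + m, m))%:Z
  end.
Proof.
case: b => // m; rewrite /binz.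
have fact_neq0 : (m`!)%:Z != 0 by rewrite eqz_nat -lt0n fact_gt0.
case: a => [p|c].
  have -> : \prod_(i < m) (p%:Z - (i : nat)%:Z) = (p ^_ m)%:Z.
    elim: m {fact_neq0} => [|m IH]; first by rewrite big_ord0 ffactn0.
    rewrite big_ord_recr /= IH ffactnSr PoszM.
    by case: (leqP m p) => [/subzn -> // | /ffact_small ->]; rewrite mul0r.
  by rewrite -bin_ffact PoszM mulzK.
have -> : \prod_(i < m) (Negz c - (i : nat)%:Z) = (-1) ^+ m * ((c + m) ^_ m)%:Z.
  elim: m {fact_neq0} => [|m IH]; first by rewrite big_ord0 ffactn0 expr0 mulr1.
  rewrite big_ord_recr /= IH addnS ffactSS PoszM NegzE exprS -addn1 PoszD.
  ring.
by rewrite -bin_ffact PoszM mulrA mulzK.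
Qed.

Lemma binz_lt0 (a b : int) : b < 0 -> binz a b = 0.
Proof. by case: b. Qed.

Lemma binz_pascal (a b : int) : binz a b = binz (a - 1) b + binz (a - 1) (b - 1).
Proof.
case: b => [[|b]|b]; last by rewrite !binz_lt0.
  by rewrite (@binz_lt0 _ (0 - 1)) // addr0 /binz !big_ord0.
have -> : Posz b.+1 - 1 = b by rewrite -addn1 PoszD addrK.
case: a => [[|a]|c].
- rewrite (_ : 0%:Z - 1 = Negz 0) // !binzE bin0n !add0n !binn exprS /=.
  ring.
- have -> : a.+1%:Z - 1 = a by rewrite -addn1 PoszD addrK.
  by rewrite !binzE binS PoszD.
- rewrite (_ : Negz c - 1 = Negz c.+1); last by rewrite !NegzE; ring.
  rewrite !binzE [(c.+1 + b.+1)%N]addSn binS addSnnS PoszD exprS; ring.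
Qed.

Definition dterm (n k j : int) : int :=
  binz (j + 1) (n - k - j) *
  (binz (n - 2 * j - 1) (k - j) + binz (n - 2 * j - 3) (k - j - 2)).

Definition dsum (n k : nat) : int := \sum_(0 <= j < k.+1) dterm n k j.

Lemma dterm_rec (n k j : int) :
  dterm n k j = dterm (n - 1) (k - 1) j + dterm (n - 2) (k - 1) (j - 1)
                + dterm (n - 3) (k - 1) (j - 1) - dterm (n - 3) (k - 2) (j - 1).
Proof.
have pascal3 (u r m l : int) :
    binz u r * (binz (m - 1) l + binz (m - 3) (l - 2)) =
    binz u r * (binz (m - 2) (l - 1) + binz (m - 4) (l - 3))
    + binz (u - 1) r * (binz (m - 1) l + binz (m - 3) (l - 2))
    + binz (u - 1) (r - 1) * (binz (m - 2) l + binz (m - 4) (l - 2))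
    - binz (u - 1) r * (binz (m - 2) (l - 1) + binz (m - 4) (l - 3)).
  rewrite [binz u r]binz_pascal [binz (m - 1) l]binz_pascal.
  rewrite [binz (m - 3) (l - 2)]binz_pascal.
  have -> : m - 1 - 1 = m - 2 by ring.
  have -> : m - 3 - 1 = m - 4 by ring.
  have -> : l - 2 - 1 = l - 3 by ring.
  ring.
rewrite /dterm pascal3.
by congr (_ + _ + _ - _); congr (binz _ _ * (binz _ _ + binz _ _)); ring.
Qed.

Lemma dterm_gt (n k j : int) : k < j -> dterm n k j = 0.
Proof.
move=> kj; rewrite /dterm (@binz_lt0 _ (k - j)) ?subr_lt0 //.
by rewrite (@binz_lt0 _ (k - j - 2)) ?addr0 ?mulr0 //; lia.
Qed.

Lemma dterm_m1 (m l : nat) : (0 < m)%N -> dterm m l (-1) = 0.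
Proof.
move=> m_gt0; rewrite /dterm.
have [->|lm] := eqVneq l m.+1.
  have -> : m%:Z - 2 * -1 - 1 = m.+1 by lia.
  have -> : m%:Z - 2 * -1 - 3 = m.-1 by lia.
  have -> : m.+1%:Z - -1 - 2 = m by lia.
  have -> : m.+1%:Z - -1 = m.+2 by lia.
  by rewrite !binzE !bin_small ?addr0 ?mulr0 //; lia.
have binz0 (b : int) : b != 0 -> binz 0 b = 0 by case: b => [[|b]|b] // _; rewrite binzE.
by rewrite binz0 ?mul0r //; lia.
Qed.

Lemma dsum_wide (n k N : nat) : (k < N)%N ->
  dsum n k = \sum_(0 <= j < N) dterm n k j.
Proof.
move=> kN; rewrite /dsum [RHS](big_cat_nat _ (n := k.+1)) //=.
rewrite [X in _ = _ + X]big_nat_cond [X in _ = _ + X]big1 ?addr0 //.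
by move=> j /andP[/andP[kj _] _]; apply: dterm_gt; lia.
Qed.

Lemma dsum_rec (n k : nat) : (0 < n)%N ->
  dsum n.+3 k.+2 = dsum n.+2 k.+1 + dsum n.+1 k.+1 + dsum n k.+1 - dsum n k.
Proof.
move=> n_gt0.
have shift (m l N : nat) : (0 < m)%N ->
    \sum_(0 <= j < N.+1) dterm m l (j%:Z - 1) = \sum_(0 <= j < N) dterm m l j.
  move=> m_gt0; rewrite big_nat_recl //= sub0r dterm_m1 // add0r.
  by apply: eq_bigr => j _; rewrite -addn1 PoszD addrK.
rewrite {1}/dsum; under eq_bigr => j _ do rewrite dterm_rec.
have -> : n.+3%:Z - 1 = n.+2 by lia.
have -> : n.+3%:Z - 2 = n.+1 by lia.
have -> : n.+3%:Z - 3 = n by lia.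
have -> : k.+2%:Z - 1 = k.+1 by lia.
have -> : k.+2%:Z - 2 = k by lia.
rewrite !sumrB !big_split /= !shift // -(@dsum_wide n k k.+2) //.
by rewrite -(@dsum_wide _ _ k.+3).
Qed.

Lemma dsum_eq0 (n k : nat) : ((3 * k).+1 < n)%N -> dsum n k = 0.
Proof.
move=> kn; rewrite /dsum big_nat big1 // => j /andP[_ jk]; rewrite /dterm.
have -> : j%:Z + 1 = j.+1 by lia.
have -> : n%:Z - k%:Z - j%:Z = (n - k - j)%N by lia.
by rewrite binzE bin_small ?mul0r //; lia.
Qed.

Lemma dsum_gt (n k : nat) : (n < k)%N -> dsum n k = 0.
Proof.
move=> nk; rewrite /dsum big_nat big1 // => j _.
by rewrite /dterm binz_lt0 ?mul0r //; lia.
Qed.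

(* [a] and [b] are the membership bits of two adjacent elements of a fence, and [dsc] says
   that the right one is covered by the left one. *)
Definition edge_closed (dsc a b : bool) : bool := if dsc then b ==> a else a ==> b.

Fixpoint bitseqs (n : nat) : seq (seq bool) :=
  if n is m.+1 then [seq rcons s b | s <- bitseqs m, b <- [:: false; true]]
  else [:: [::]].

Lemma bitseqsS (n : nat) :
  bitseqs n.+1 = [seq rcons s b | s <- bitseqs n, b <- [:: false; true]].
Proof. by []. Qed.

Lemma mem_bitseqs (n : nat) (s : seq bool) : (s \in bitseqs n) = (size s == n).
Proof.
elim: n s => [|n IH] s; first by case: s.
apply/allpairsP/idP => [[[t b] /= [t_in _ ->]] | ].
  by rewrite size_rcons eqSS -IH.
case/lastP: s => [//|t b].
by rewrite size_rcons eqSS -IH => t_in; exists (t, b); case: b.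
Qed.

Lemma uniq_bitseqs (n : nat) : uniq (bitseqs n).
Proof.
elim: n => [|n IH] //; apply: allpairs_uniq => // [[t b] [t' b']] _ _ /=.
by move=> /rcons_inj [-> ->].
Qed.

(* Appending the letter [c] after the last letter [l]: [f] and [g] record whether the old and
   the new last letter may be flipped as far as their left neighbour is concerned. *)
Definition transfer (dsc : bool) (w : bool -> bool -> {poly int}) (c g : bool) :
    {poly int} :=
  \sum_(l : bool) \sum_(f : bool)
    (if edge_closed dsc l c && (edge_closed dsc l (~~ c) == g)
     then 'X^(f && edge_closed dsc (~~ l) c) * w l f else 0).

Section Fence.

(* The fence on 0, 1, 2, ... in which [i.+1] is covered by [i] iff [desc i]. *)
Variable desc : nat -> bool.

Definition fence_cover (a b : nat) : bool :=
  ((b == a.+1) && ~~ desc a) || ((a == b.+1) && desc b).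

Definition fence_filter (s : seq bool) : bool :=
  all (fun i => edge_closed (desc i) (nth false s i) (nth false s i.+1))
      (iota 0 (size s).-1).

Definition flip (s : seq bool) (i : nat) : seq bool :=
  set_nth false s i (~~ nth false s i).

Definition flip_deg (s : seq bool) : nat :=
  count (fun i => fence_filter (flip s i)) (iota 0 (size s)).

Definition flip_left_ok (s : seq bool) (i : nat) : bool :=
  (0 < i)%N ==> edge_closed (desc i.-1) (nth false s i.-1) (~~ nth false s i).

Definition flip_right_ok (s : seq bool) (i : nat) : bool :=
  (i.+1 < size s)%N ==> edge_closed (desc i) (~~ nth false s i) (nth false s i.+1).

Definition flippable (s : seq bool) (i : nat) : bool :=
  flip_left_ok s i && flip_right_ok s i.

Lemma fence_filter_flip (s : seq bool) (i : nat) :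
  fence_filter s -> (i < size s)%N -> fence_filter (flip s i) = flippable s i.
Proof.
move=> filter_s i_lt; rewrite /fence_filter size_set_nth (maxn_idPr i_lt).
have nthE j : nth false (flip s i) j = if j == i then ~~ nth false s i else nth false s j.
  by rewrite nth_set_nth.
apply/allP/andP => [edges | [left right] j j_in].
  split; apply/implyP => lt_i.
    have /edges : i.-1 \in iota 0 (size s).-1 by rewrite mem_iota; lia.
    by rewrite !nthE (prednK lt_i) eqxx (ltn_eqF (_ : i.-1 < i)%N) //; lia.
  have /edges : i \in iota 0 (size s).-1 by rewrite mem_iota; lia.
  by rewrite !nthE eqxx (gtn_eqF (ltnSn i)).
move: (j_in); rewrite mem_iota => /andP[_ j_lt]; rewrite !nthE.
have [ji | ji] := eqVneq j i.
  subst j; rewrite (gtn_eqF (ltnSn i)); apply: (implyP right).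
  by move: j_lt; rewrite add0n -subn1 ltn_subRL add1n.
have [j1i | j1i] := eqVneq j.+1 i.
  by subst i; apply: left.
exact: (allP filter_s j j_in).
Qed.

Definition prefix_deg (s : seq bool) : nat := count (flippable s) (iota 0 (size s).-1).

Section Rcons.

Context {s : seq bool} {m : nat}.
Hypothesis size_s : size s = m.+1.

Let nth_rcons_old c i : (i <= m)%N -> nth false (rcons s c) i = nth false s i.
Proof. by rewrite nth_rcons size_s ltnS => ->. Qed.

Let nth_rcons_new c : nth false (rcons s c) m.+1 = c.
Proof. by rewrite nth_rcons size_s ltnn eqxx. Qed.

Lemma flip_deg_prefix_deg :
  fence_filter s -> flip_deg s = (prefix_deg s + flip_left_ok s m)%N.
Proof.
move=> filter_s; rewrite /flip_deg /prefix_deg size_s succnK -addn1 iotaD count_cat /= addn0.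
congr addn.
  apply: eq_in_count => i; rewrite mem_iota => /andP[_ i_lt].
  by rewrite fence_filter_flip // size_s; lia.
by rewrite fence_filter_flip ?size_s // /flippable /flip_right_ok size_s ltnn andbT.
Qed.

Lemma fence_filter_rcons c :
  fence_filter (rcons s c) = fence_filter s && edge_closed (desc m) (nth false s m) c.
Proof.
rewrite /fence_filter size_rcons size_s !succnK -addn1 iotaD all_cat /= andbT add0n.
congr andb; last by rewrite nth_rcons_new nth_rcons_old.
by apply: eq_in_all => i; rewrite mem_iota => /andP[_ i_lt]; rewrite !nth_rcons_old //; lia.
Qed.

Lemma prefix_deg_rcons c : prefix_deg (rcons s c) =
  (prefix_deg s + (flip_left_ok s m && edge_closed (desc m) (~~ nth false s m) c))%N.
Proof.
rewrite /prefix_deg size_rcons size_s !succnK -addn1 iotaD count_cat /= addn0 add0n.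
congr addn.
  apply: eq_in_count => /= i; rewrite mem_iota => /andP[_ i_lt].
  rewrite /flippable /flip_left_ok /flip_right_ok size_rcons size_s.
  have [lt1 lt2] : (i.+1 < m.+2)%N /\ (i.+1 < m.+1)%N by lia.
  have le2 : (i <= m)%N by lia.
  have le1 : (i.-1 <= m)%N := leq_trans (leq_pred i) le2.
  by rewrite lt1 lt2 !nth_rcons_old.
rewrite /flippable /flip_left_ok /flip_right_ok size_rcons size_s ltnSn nth_rcons_new.
by rewrite !nth_rcons_old // leq_pred.
Qed.

Lemma flip_left_ok_rcons c :
  flip_left_ok (rcons s c) m.+1 = edge_closed (desc m) (nth false s m) (~~ c).
Proof. by rewrite /flip_left_ok /= nth_rcons_new nth_rcons_old. Qed.

End Rcons.

Fixpoint fence_weight (m : nat) : bool -> bool -> {poly int} :=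
  if m is m'.+1 then transfer (desc m') (fence_weight m') else fun _ f => f%:R.

Lemma fence_weightP (m : nat) (h : bool -> bool -> {poly int}) :
  \sum_(s <- bitseqs m.+1 | fence_filter s)
     'X^(prefix_deg s) * h (nth false s m) (flip_left_ok s m)
  = \sum_(l : bool) \sum_(f : bool) fence_weight m l f * h l f.
Proof.
elim: m h => [|m IH] h.
  rewrite (_ : bitseqs 1 = [:: [:: false]; [:: true]]) // !big_cons big_nil !big_bool.
  rewrite /fence_filter /prefix_deg /flip_left_ok /= expr0 !mul1r.
  ring.
pose h' l f := \sum_(c : bool) (if edge_closed (desc m) l c
  then 'X^(f && edge_closed (desc m) (~~ l) c) * h c (edge_closed (desc m) l (~~ c)) else 0).
rewrite bitseqsS big_mkcond big_allpairs_dep.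
transitivity (\sum_(s <- bitseqs m.+1 | fence_filter s)
                'X^(prefix_deg s) * h' (nth false s m) (flip_left_ok s m)).
  rewrite [RHS]big_mkcond !big_seq; apply: eq_bigr => s; rewrite mem_bitseqs => /eqP size_s.
  rewrite !big_cons big_nil /= addr0 /h' big_bool /= addrC.
  rewrite !(fence_filter_rcons size_s) !(prefix_deg_rcons size_s).
  rewrite !(flip_left_ok_rcons size_s) !nth_rcons size_s ltnn eqxx.
  case: (fence_filter s) => //=; last by rewrite addr0.
  case: (edge_closed _ _ false); case: (edge_closed _ _ true);
    rewrite ?exprD; ring.
rewrite IH /= /transfer /h'; move: (fence_weight m) => w.
by rewrite !big_bool; case: (desc m) => /=; ring.
Qed.

Definition fence_poly (n : nat) : {poly int} :=
  \sum_(s <- bitseqs n | fence_filter s) 'X^(flip_deg s).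

Lemma fence_polyE (m : nat) :
  fence_poly m.+1 = \sum_(l : bool) \sum_(f : bool) 'X^f * fence_weight m l f.
Proof.
rewrite /fence_poly big_seq_cond.
under eq_bigr => s /andP[/[!mem_bitseqs]/eqP size_s filter_s].
  rewrite (flip_deg_prefix_deg size_s filter_s) exprD.
  over.
rewrite -big_seq_cond (fence_weightP m (fun _ f => 'X^f)).
by apply: eq_bigr => l _; apply: eq_bigr => f _; rewrite mulrC.
Qed.

Lemma coef_fence_poly (n k : nat) :
  (fence_poly n)`_k = (count (fun s => fence_filter s && (flip_deg s == k)) (bitseqs n))%:R.
Proof.
rewrite /fence_poly coef_sum -sum1_count natr_sum big_mkcond [RHS]big_mkcond /=.
by apply: eq_bigr => s _; rewrite coefXn eq_sym; case: (fence_filter s); case: (_ == k).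
Qed.

Lemma fence_poly_rec (m : nat) : desc m.+1 = ~~ desc m -> desc m.+2 = desc m ->
  fence_poly m.+4 =
  'X * (fence_poly m.+3 + fence_poly m.+2 + fence_poly m.+1) - 'X^2 * fence_poly m.+1.
Proof.
move=> alt1 alt2; rewrite !fence_polyE.
have weightS k : fence_weight k.+1 = transfer (desc k) (fence_weight k) by [].
rewrite (weightS m.+2) (weightS m.+1) (weightS m) alt1 alt2.
move: (fence_weight m) => w; rewrite /transfer !big_bool.
by case: (desc m) => /=; ring.
Qed.

End Fence.

Lemma card_set_count (T : finType) (P : pred T) : #|[set x | P x]| = count P (enum T).
Proof. by rewrite cardsE cardE -size_filter enumT /enum_mem. Qed.

Lemma connect_closedP (T : finType) (e : rel T) (F : {set T}) :
  reflect (forall a b, e a b -> a \in F -> b \in F)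
          [forall a, forall b, (a \in F) && connect e a b ==> (b \in F)].
Proof.
apply: (iffP forallP) => [closed a b ab aF | step a].
  by have /forallP/(_ b) := closed a; rewrite aF connect1.
apply/forallP => b; apply/implyP => /andP[aF /connectP[p path_p ->]].
by elim: p a aF path_p => //= c p IH a aF /andP[ac /IH]; apply; apply: step aF.
Qed.

(* x_(i+2) is covered by x_(i+1) exactly when i = 0 or i is odd. *)
Definition xi_desc (i : nat) : bool := (i == 0)%N || odd i.

Lemma xi_coverE (n : nat) (a b : 'I_n) : xi_cover a b = fence_cover xi_desc a b.
Proof.
rewrite /xi_cover /fence_cover /xi_desc.
case: (nat_of_ord a) => [|[|[|a']]]; case: (nat_of_ord b) => [|[|[|b']]] //=.
all: rewrite ?negbK ?eqSS ?andbT ?andbF ?orbF //=.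
by rewrite andbC [X in _ || X]andbC.
Qed.

Definition bits {n : nat} (F : {set 'I_n}) : seq bool := [seq x \in F | x <- enum 'I_n].

Lemma size_bits (n : nat) (F : {set 'I_n}) : size (bits F) = n.
Proof. by rewrite size_map size_enum_ord. Qed.

Lemma nth_bits (n : nat) (F : {set 'I_n}) (x : 'I_n) : nth false (bits F) x = (x \in F).
Proof. by rewrite (nth_map x) ?size_enum_ord // nth_ord_enum. Qed.

Lemma fence_filter_bits (desc : nat -> bool) (n : nat) (F : {set 'I_n}) :
  reflect (forall a b : 'I_n, fence_cover desc a b -> a \in F -> b \in F)
          (fence_filter desc (bits F)).
Proof.
apply: (iffP allP) => [edges a b | closed i].
  rewrite /fence_cover => /orP[/andP[/eqP ba up] | /andP[/eqP ab down]] aF.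
    have /edges : (a : nat) \in iota 0 (size (bits F)).-1.
      by rewrite mem_iota size_bits; have := ltn_ord b; lia.
    by rewrite (negbTE up) -ba !nth_bits aF.
  have /edges : (b : nat) \in iota 0 (size (bits F)).-1.
    by rewrite mem_iota size_bits; have := ltn_ord a; lia.
  by rewrite down -ab !nth_bits aF.
rewrite mem_iota size_bits => /andP[_ i_lt].
have [lt0 lt1] : (i < n)%N /\ (i.+1 < n)%N by lia.
rewrite -[i]/(Ordinal lt0 : nat) -[i.+1]/(Ordinal lt1 : nat) !nth_bits.
case: (boolP (desc i)) => [down | up] /=; apply/implyP; apply: closed.
  by rewrite /fence_cover /= eqxx down orbT.
by rewrite /fence_cover /= eqxx up.
Qed.

Lemma is_filterP (n : nat) (F : {set 'I_n}) :
  reflect (forall a b, xi_cover a b -> a \in F -> b \in F) (is_filter F).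
Proof. exact: connect_closedP. Qed.

Lemma is_filter_bits (n : nat) (F : {set 'I_n}) : is_filter F = fence_filter xi_desc (bits F).
Proof.
apply/is_filterP/fence_filter_bits => closed a b.
  by rewrite -xi_coverE; apply: closed.
by rewrite xi_coverE; apply: closed.
Qed.

Definition toggle {n : nat} (F : {set 'I_n}) (x : 'I_n) : {set 'I_n} :=
  if x \in F then F :\ x else x |: F.

Lemma toggle_inj {n : nat} (F : {set 'I_n}) : injective (toggle F).
Proof.
move=> x y; rewrite /toggle.
case xF: (x \in F); case yF: (y \in F) => /setP/(_ x); rewrite !inE eqxx xF /=.
- by rewrite andbT => /esym/negbFE/eqP.
- by rewrite orbT.
- by rewrite andbF.
- by rewrite orbF => /esym/eqP.
Qed.

Lemma omega_adj_toggle (n : nat) (F G : {set 'I_n}) :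
  omega_adj F G = [exists x, G == toggle F x].
Proof.
apply/existsP/existsP => [[x /orP[/andP[xF /eqP ->] | /andP[xG /eqP FE]]] | [x /eqP ->]].
- by exists x; rewrite /toggle xF.
- have xF : x \notin F by rewrite FE setD11.
  by exists x; rewrite /toggle (negbTE xF) FE setD1K.
exists x; rewrite /toggle; case: ifP => xF; first by rewrite eqxx.
by rewrite setU11 setU1K ?xF ?eqxx ?orbT.
Qed.

Lemma omega_degE (n : nat) (F : {set 'I_n}) :
  omega_deg F = #|[set x | is_filter (toggle F x)]|.
Proof.
rewrite /omega_deg -(card_imset _ (toggle_inj F)).
congr #|pred_of_set _|; apply/setP => G; rewrite !inE omega_adj_toggle.
apply/andP/imsetP => [[filter_G /existsP[x /eqP GE]] | [x]].
  by exists x; rewrite // inE -GE.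
by rewrite inE => filter_x ->; split; last by apply/existsP; exists x.
Qed.

Lemma bits_toggle (n : nat) (F : {set 'I_n}) (x : 'I_n) :
  bits (toggle F x) = flip (bits F) x.
Proof.
apply: (@eq_from_nth _ false); first by rewrite size_set_nth !size_bits (maxn_idPr (ltn_ord x)).
move=> i; rewrite size_bits => i_lt.
rewrite nth_set_nth /= -[i == x]/(Ordinal i_lt == x) -[i]/(Ordinal i_lt : nat).
rewrite !nth_bits /toggle; case: eqVneq => [-> | ix].
  by case: ifP => xF; rewrite !inE eqxx ?xF.
by case: ifP => xF; rewrite !inE ?ix ?(negbTE ix).
Qed.

Lemma omega_deg_bits (n : nat) (F : {set 'I_n}) : omega_deg F = flip_deg xi_desc (bits F).
Proof.
rewrite omega_degE card_set_count /flip_deg size_bits -val_enum_ord count_map.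
by apply: eq_count => x; rewrite /= is_filter_bits bits_toggle.
Qed.

Lemma perm_bits (n : nat) : perm_eq [seq bits F | F <- enum {set 'I_n}] (bitseqs n).
Proof.
apply: uniq_perm; [rewrite map_inj_uniq ?enum_uniq // | exact: uniq_bitseqs | ].
  by move=> F G FG; apply/setP => x; rewrite -!nth_bits FG.
move=> s; rewrite mem_bitseqs; apply/mapP/eqP => [[F _ ->] | size_s]; first exact: size_bits.
exists [set x : 'I_n | nth false s x]; first by rewrite mem_enum.
apply: (@eq_from_nth _ false); first by rewrite size_bits.
by move=> i; rewrite size_s => i_lt; rewrite -[i]/(Ordinal i_lt : nat) nth_bits inE.
Qed.

Lemma d_count (n k : nat) :
  d n k = count (fun s => fence_filter xi_desc s && (flip_deg xi_desc s == k)) (bitseqs n).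
Proof.
rewrite /d card_set_count -(permP (perm_bits n)) [RHS]count_map.
by apply: eq_count => F; rewrite /= is_filter_bits omega_deg_bits.
Qed.

Lemma d_gt (n k : nat) : (n < k)%N -> d n k = 0%N.
Proof.
move=> nk; rewrite d_count; apply/eqP; rewrite -leqn0 leqNgt -has_count.
apply/hasP => -[s /[!mem_bitseqs] /eqP size_s /andP[_ /eqP deg_s]].
have := count_size (fun i => fence_filter xi_desc (flip s i)) (iota 0 (size s)).
by rewrite -/(flip_deg _ s) deg_s size_iota size_s; lia.
Qed.

Lemma d_small (n k : nat) : (2 <= n <= 4)%N -> (d n k)%:Z = dsum n k.
Proof.
case/andP => n_ge2 n_le4; have [nk | kn] := ltnP n k; first by rewrite d_gt ?dsum_gt.
rewrite d_count /dsum; under eq_bigr => j _ do rewrite /dterm !binzE.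
rewrite unlock; move: n_ge2 n_le4 kn.
by case: n => [|[|[|[|[|n]]]]] //; case: k => [|[|[|[|[|k]]]]] // _ _ _; vm_compute.
Qed.

Lemma d_fence_poly (n k : nat) : (d n k)%:Z = (fence_poly xi_desc n)`_k.
Proof. by rewrite coef_fence_poly d_count natz. Qed.

Lemma xi_poly_rec (m : nat) : (0 < m)%N -> fence_poly xi_desc m.+4 =
  'X * (fence_poly xi_desc m.+3 + fence_poly xi_desc m.+2 + fence_poly xi_desc m.+1)
  - 'X^2 * fence_poly xi_desc m.+1.
Proof. by case: m => // m _; apply: fence_poly_rec; rewrite /xi_desc /= ?negbK. Qed.

Lemma d_rec (m k : nat) : (0 < m)%N ->
  (d m.+4 k)%:Z =
  if k is k'.+1 then
    (d m.+3 k')%:Z + (d m.+2 k')%:Z + (d m.+1 k')%:Z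
    - (if k' is k''.+1 then (d m.+1 k'')%:Z else 0)
  else 0.
Proof.
move=> m_gt0; rewrite d_fence_poly xi_poly_rec // coefB expr2 -mulrA !coefXM.
by case: k => [|[|k]]; rewrite /= ?subr0 // !coefD -!d_fence_poly.
Qed.

Lemma d_dsum (n k : nat) : (2 <= n)%N -> (d n k)%:Z = dsum n k.
Proof.
elim/ltn_ind: n k => n IH k n_ge2.
have [n_le4 | n_gt4] := leqP n 4; first by apply: d_small; rewrite n_ge2.
have [m n_eq m_gt0] : exists2 m, n = m.+4 & (0 < m)%N by exists (n - 4)%N; lia.
subst n; rewrite (d_rec _ _ m_gt0).
have IH1 i : (d m.+1 i)%:Z = dsum m.+1 i by apply: IH; lia.
have IH2 i : (d m.+2 i)%:Z = dsum m.+2 i by apply: IH; lia.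
have IH3 i : (d m.+3 i)%:Z = dsum m.+3 i by apply: IH; lia.
case: k => [|[|k]]; first by rewrite dsum_eq0.
  by rewrite IH1 IH2 IH3 !dsum_eq0 ?subr0.
by rewrite IH1 IH2 IH3 IH1 dsum_rec.
Qed.

Theorem mainTheorem17 (n k : nat) (hn : (2 <= n)%N) :
  (d n k)%:Z =
  \sum_(0 <= j < k.+1)
     binz (j%:Z + 1) (n%:Z - k%:Z - j%:Z) *
     (binz (n%:Z - 2 * j%:Z - 1) (k%:Z - j%:Z)
      + binz (n%:Z - 2 * j%:Z - 3) (k%:Z - j%:Z - 2)).
Proof. exact: d_dsum. Qed.
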